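(* Let $X$ be a metric space, $\mathcal M=\{M_1,\dots,M_n\}\subset\mathcal P^f_{\mathrm{Cl}}(X)$, $\Sigma(\mathcal M)\neq\emptyset$ and $d=(d_1,\dots,d_n)\in\Omega(\mathcal M)$. Suppose that $d_i=\sup_{x\in M_i}|x\,K_d|$ for some index $i$. Then $d_i=\sup_{x\in M_i}|x\,K|$ for every $K\in\Sigma_d(\mathcal M)$.
   Context: For a metric space $X$, $p\in X$, $A\subset X$: $|p\,A|=\inf_{a\in A}|p\,a|$ ($=\infty$ if $A=\emptyset$); for $0\le r<\infty$, $B_r(A)=\{p:|p\,A|\le r\}$. For nonempty $A,B$, $d_H(A,B)=\max\{\sup_{a\in A}|a\,B|,\sup_{b\in B}|b\,A|\}\in[0,\infty]$. $\mathcal P_{\mathrm{Cl}}(X)$ is the set of nonempty closed subsets of $X$ with $d_H$. A finiteness class of $\mathcal P_{\mathrm{Cl}}(X)$ is an equivalence class of the relation $A\sim B\iff d_H(A,B)<\infty$; $\mathcal P^f_{\mathrm{Cl}}(X)$ denotes a fixed finiteness class. For finite $\mathcal M=\{M_1,\dots,M_n\}\subset\mathcal P^f_{\mathrm{Cl}}(X)$, set $S_{\mathcal M}(Y)=\sum_{i=1}^n d_H(Y,M_i)$ for $Y\in\mathcal P^f_{\mathrm{Cl}}(X)$; $\Sigma(\mathcal M)$ is the set of all minimizers of $S_{\mathcal M}$ over $\mathcal P^f_{\mathrm{Cl}}(X)$. For $K\in\Sigma(\mathcal M)$, $d(K)=(d_H(K,M_1),\dots,d_H(K,M_n))$; $\Omega(\mathcal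 M)=\{d(K):K\in\Sigma(\mathcal M)\}$; for $d=(d_1,\dots,d_n)\in\Omega(\mathcal M)$, $\Sigma_d(\mathcal M)=\{K\in\Sigma(\mathcal M):d(K)=d\}$, partially ordered by inclusion; and $K_d=\bigcap_{i=1}^n B_{d_i}(M_i)$. *)

From HB Require Import structures.
From mathcomp Require Import all_boot all_order all_algebra.
From mathcomp Require Import all_classical all_reals all_analysis.
Set Implicit Arguments. Unset Strict Implicit. Unset Printing Implicit Defensive.
Import Order.TTheory GRing.Theory Num.Theory.
Local Open Scope classical_set_scope.
Local Open Scope ring_scope.

Definition is_metric (R : realType) (T : Type) (dist : T -> T -> R) : Prop :=
  (forall x y, dist x y = 0 <-> x = y) /\
  (forall x y, dist x y = dist y x) /\
  (forall x y z, dist x z <= dist x y + dist y z).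

Local Open Scope ereal_scope.

(* |p A| = inf_{a in A} |p a|, equal to +oo when A is empty. *)
Definition dist_set (R : realType) (T : Type) (dist : T -> T -> R)
  (p : T) (A : set T) : \bar R :=
  ereal_inf [set (dist p a)%:E | a in A].

Definition mball (R : realType) (T : Type) (dist : T -> T -> R)
  (r : \bar R) (A : set T) : set T :=
  [set p | dist_set dist p A <= r].

Definition mclosed (R : realType) (T : Type) (dist : T -> T -> R) (A : set T) : Prop :=
  forall p, dist_set dist p A = 0 -> A p.

Definition hausdorff (R : realType) (T : Type) (dist : T -> T -> R)
  (A B : set T) : \bar R :=
  maxe (ereal_sup [set dist_set dist a B | a in A])
       (ereal_sup [set dist_set dist b A | b in B]).

(* The finiteness class of P_Cl(X) containing the nonempty closed set C. *)
Definition fin_class (R : realType) (T : Type) (dist : T -> T -> R)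
  (C : set T) : set (set T) :=
  [set Y | Y !=set0 /\ mclosed dist Y /\ hausdorff dist Y C < +oo].

Definition S_M (R : realType) (T : Type) (dist : T -> T -> R) (n : nat)
  (M : 'I_n -> set T) (Y : set T) : \bar R :=
  \sum_(i < n) hausdorff dist Y (M i).

Definition Sigma (R : realType) (T : Type) (dist : T -> T -> R) (C : set T)
  (n : nat) (M : 'I_n -> set T) : set (set T) :=
  [set K | fin_class dist C K /\
           forall Y, fin_class dist C Y -> S_M dist M K <= S_M dist M Y].

Definition dvec (R : realType) (T : Type) (dist : T -> T -> R) (n : nat)
  (M : 'I_n -> set T) (K : set T) : 'I_n -> \bar R :=
  fun i => hausdorff dist K (M i).

Definition Omega (R : realType) (T : Type) (dist : T -> T -> R) (C : set T)
  (n : nat) (M : 'I_n -> set T) : set ('I_n -> \bar R) :=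
  [set d | exists2 K, Sigma dist C M K & dvec dist M K = d].

Definition Sigma_d (R : realType) (T : Type) (dist : T -> T -> R) (C : set T)
  (n : nat) (M : 'I_n -> set T) (d : 'I_n -> \bar R) : set (set T) :=
  [set K | Sigma dist C M K /\ dvec dist M K = d].

Definition K_d (R : realType) (T : Type) (dist : T -> T -> R) (n : nat)
  (M : 'I_n -> set T) (d : 'I_n -> \bar R) : set T :=
  \bigcap_(i in [set: 'I_n]) mball dist (d i) (M i).

From HB Require Import structures.
From mathcomp Require Import all_boot all_order all_algebra.
From mathcomp Require Import all_classical all_reals all_analysis.
Import Order.TTheory GRing.Theory Num.Theory.
Local Open Scope classical_set_scope.
Local Open Scope ereal_scope.

(* Every K in Sigma_d(M) lies in K_d, so |x K_d| <= |x K|; and sup_{x in M_i} |x K|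
   is one of the two terms of d_H(K, M_i) = d_i.  Hence
   d_i = sup_{x in M_i} |x K_d| <= sup_{x in M_i} |x K| <= d_i. *)

Section DistSet.
Context {R : realType} {T : Type} (dist : T -> T -> R).

Lemma dist_set_le_subset (p : T) {A B : set T} :
  A `<=` B -> dist_set dist p B <= dist_set dist p A.
Proof.
by move=> AB; apply: ereal_inf_le_tmp; exact: image_subset.
Qed.

Lemma subset_mball_hausdorff (A B : set T) :
  A `<=` mball dist (hausdorff dist A B) B.
Proof.
move=> a Aa; rewrite /mball /hausdorff /= le_max; apply/orP; left.
by apply: ereal_sup_ubound; exists a.
Qed.

Lemma sup_dist_set_le_hausdorff (A B : set T) :
  ereal_sup [set dist_set dist b A | b in B] <= hausdorff dist A B.
Proof. by rewrite /hausdorff le_max lexx orbT. Qed.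

Lemma subset_K_d (n : nat) (M : 'I_n -> set T) (K : set T) :
  K `<=` K_d dist M (dvec dist M K).
Proof. by move=> k Kk i _; exact: subset_mball_hausdorff. Qed.

End DistSet.

Theorem mainTheorem15 (R : realType) (T : Type) (dist : T -> T -> R)
  (C : set T) (n : nat) (M : 'I_n -> set T) (d : 'I_n -> \bar R) :
  is_metric dist ->
  C !=set0 -> mclosed dist C ->
  (forall i, fin_class dist C (M i)) ->
  Sigma dist C M !=set0 ->
  Omega dist C M d ->
  forall i : 'I_n,
    d i = ereal_sup [set dist_set dist x (K_d dist M d) | x in M i] ->
    forall K, Sigma_d dist C M d K ->
      d i = ereal_sup [set dist_set dist x K | x in M i].
Proof.
move=> _ _ _ _ _ _ i di_sup K [_ dK].
have KK_d : K `<=` K_d dist M d by rewrite -dK; exact: subset_K_d.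
apply/le_anti/andP; split.
  rewrite di_sup; apply: ge_ereal_sup => _ [x Mx <-].
  apply: le_trans (dist_set_le_subset dist x KK_d) _.
  by apply: ereal_sup_ubound; exists x.
by rewrite -dK /dvec; exact: sup_dist_set_le_hausdorff.
Qed.
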